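(* Consider the discrete-time system $x(t+1) = A x(t) + C v(t) + w$ for $t=0,1,2,\ldots$, with $A \in \mathbb{R}^{d_x\times d_x}$, $C \in \mathbb{R}^{d_x \times d_v}$, constant $w \in \mathbb{R}^{d_x}$, and disturbance input $v(t) \in \mathcal V = \langle c_{\mathcal V} \mid G_{\mathcal V}\rangle$, where $c_{\mathcal V} \in \mathbb{R}^{d_v}$ and $G_{\mathcal V} \in \mathbb{R}^{d_v \times n_{\mathcal V}}$. Let $\mathcal X = \{ x \in \mathbb{R}^{d_x} \mid \underline x \leq x \leq \overline x\}$ and $T \geq 0$ an integer. Let $G_{\mathcal I} \in \mathbb{R}^{d_x \times n_{\mathcal I}}$, $\alpha \in \mathbb{R}^{d_x}$, $\gamma \in \mathbb{R}^{n_{\mathcal I}}$ with $\gamma\geq 0$, $\Gamma = \mathrm{diag}(\gamma)$, and $\mathcal I = \langle \alpha \mid G_{\mathcal I}\Gamma\rangle$. If for all $t = 0,\ldots,T$ \[ A^t\alpha + \sum_{s=0}^{t-1} A^{t-1-s}(C c_{\mathcal V} + w) - |A^t G_{\mathcal I}|\gamma - \sum_{s=0}^{t-1} |A^{t-1-s} C G_{\mathcal V}|\mathbf{1}_{n_{\mathcal V}} \geq \underline x, \] \[ A^t\alpha + \sum_{s=0}^{t-1} A^{t-1-s}(C c_{\mathcal V} + w) + |A^t G_{\mathcal I}|\gamma + \sum_{s=0}^{t-1} |A^{t-1-s} C G_{\mathcal V}|\mathbf{1}_{n_{\mathcal V}} \leq \overline x, \] then $\mathcal I \subseteq \mathrm{Inv}_{[0,T]}(\mathcal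 X)$, where $\mathrm{Inv}_{[0,T]}(\mathcal X)$ is the set of $x(0) \in \mathcal X$ such that for every disturbance signal with $v(t) \in \mathcal V$ for all $t$, the resulting trajectory satisfies $x(t) \in \mathcal X$ for all $t = 0,\ldots,T$.
   Context: Vector inequalities are elementwise; $|M|$ is the elementwise absolute value; $\mathbf{1}_n$ is the all-ones vector in $\mathbb{R}^n$. The notation $\langle c \mid G\rangle$ denotes the zonotope $\{c + G\lambda : \lambda \in [-1,1]^n\}$. $\mathrm{diag}(\gamma)$ is the diagonal matrix with $\gamma$ on its diagonal. *)

From mathcomp Require Import all_boot all_order all_algebra.
Set Implicit Arguments. Unset Strict Implicit. Unset Printing Implicit Defensive.
Import Order.TTheory GRing.Theory Num.Theory.
Local Open Scope ring_scope.

Definition vle (R : realFieldType) (n : nat) (x y : 'cV[R]_n) : Prop :=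
  forall i, x i 0 <= y i 0.

Definition mabs (R : realFieldType) (m n : nat) (M : 'M[R]_(m, n)) : 'M[R]_(m, n) :=
  map_mx (fun a => `|a|) M.

Definition ones (R : realFieldType) (n : nat) : 'cV[R]_n := const_mx 1.

Definition zonotope (R : realFieldType) (d k : nat) (c : 'cV[R]_d) (G : 'M[R]_(d, k))
  (x : 'cV[R]_d) : Prop :=
  exists lam : 'cV[R]_k, (forall i, -1 <= lam i 0 <= 1) /\ x = c + G *m lam.

Definition box (R : realFieldType) (d : nat) (xlo xhi x : 'cV[R]_d) : Prop :=
  vle xlo x /\ vle x xhi.

Fixpoint traj (R : realFieldType) (dx dv : nat) (A : 'M[R]_dx) (C : 'M[R]_(dx, dv))
  (w : 'cV[R]_dx) (x0 : 'cV[R]_dx) (v : nat -> 'cV[R]_dv) (t : nat) : 'cV[R]_dx :=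
  match t with
  | 0 => x0
  | t'.+1 => A *m traj A C w x0 v t' + C *m v t' + w
  end.

Definition Inv (R : realFieldType) (dx dv : nat) (A : 'M[R]_dx) (C : 'M[R]_(dx, dv))
  (w : 'cV[R]_dx) (Vset : 'cV[R]_dv -> Prop) (X : 'cV[R]_dx -> Prop) (T : nat)
  (x0 : 'cV[R]_dx) : Prop :=
  X x0 /\
  forall v : nat -> 'cV[R]_dv, (forall t, Vset (v t)) ->
    forall t, (t <= T)%N -> X (traj A C w x0 v t).

From mathcomp Require Import all_boot all_order all_algebra.
From mathcomp Require Import zify lra.
Import Order.TTheory GRing.Theory Num.Theory.
Local Open Scope ring_scope.

(** The trajectory is affine in the initial state and the disturbances, so its
    deviation from the nominal trajectory (start at [alpha], disturbance
    constantly [cV]) is [A^t (x0 - alpha) + sum_s A^(t-1-s) C (v s - cV)].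
    Each term is the image of a zonotope generator combination with
    coefficients in [-1, 1], hence bounded entrywise by the absolute value of
    the mapped generator matrix applied to the coefficient bounds; the
    hypothesis then keeps the nominal trajectory plus this radius in the box. *)

Section BoxInvariance.

Local Set Implicit Arguments.
Local Unset Strict Implicit.

Variable R : realFieldType.

Lemma zonotope_center (d k : nat) (c : 'cV[R]_d) (G : 'M[R]_(d, k)) :
  zonotope c G c.
Proof. by exists 0; rewrite mulmx0 addr0; split=> // i; rewrite mxE lerN10 ler01. Qed.

Lemma norm_mulmx_le_mabs (d k : nat) (M : 'M[R]_(d, k)) (u b : 'cV[R]_k) i :
  (forall j, `|u j 0| <= b j 0) -> `|(M *m u) i 0| <= (mabs M *m b) i 0.
Proof.
move=> hb; rewrite !mxE; apply: le_trans (ler_norm_sum _ _ _) _.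
by apply: ler_sum => j _; rewrite mxE normrM ler_wpM2l.
Qed.

Lemma norm_mulmx_zonotope_le (d e k : nat) (M : 'M[R]_(e, d))
    (c x : 'cV[R]_d) (G : 'M[R]_(d, k)) i :
  zonotope c G x -> `|(M *m (x - c)) i 0| <= (mabs (M *m G) *m ones R k) i 0.
Proof.
move=> [lam [hlam ->]]; rewrite addrC addKr mulmxA.
by apply: norm_mulmx_le_mabs => j; rewrite mxE ler_norml.
Qed.

Lemma mabs_mul_diag_ones (d k : nat) (M : 'M[R]_(d, k)) (g : 'cV[R]_k) :
  (forall j, 0 <= g j 0) -> mabs (M *m diag_mx g^T) *m ones R k = mabs M *m g.
Proof.
move=> g_ge0; apply/matrixP => i l; rewrite !mxE; apply: eq_bigr => j _.
by rewrite mul_mx_diag !mxE ord1 normrM (ger0_norm (g_ge0 j)) mulr1.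
Qed.

Lemma box_of_radius (d : nat) (lo hi m r x : 'cV[R]_d) :
  (forall i, `|(x - m) i 0| <= r i 0) -> vle lo (m - r) -> vle (m + r) hi ->
  box lo hi x.
Proof.
move=> hx hlo hhi; split=> i; move: (hx i) (hlo i) (hhi i);
  rewrite !mxE ler_norml => /andP[? ?] ? ?; lra.
Qed.

Variables (dx dv : nat) (A : 'M[R]_dx) (C : 'M[R]_(dx, dv)) (w : 'cV[R]_dx).

Lemma trajE (x0 : 'cV[R]_dx) (v : nat -> 'cV[R]_dv) (t : nat) :
  traj A C w x0 v t = A ^+ t *m x0 + \sum_(s < t) A ^+ (t.-1 - s) *m (C *m v s + w).
Proof.
have exprSmx n : A *m A ^+ n = A ^+ n.+1 by rewrite exprS mulmxE.
elim: t => [|t IH] /=; first by rewrite expr0 mul1mx big_ord0 addr0.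
rewrite IH big_ord_recr /= subnn expr0 mul1mx mulmxDr mulmx_sumr mulmxA.
rewrite exprSmx -!addrA; congr (_ + (_ + _)); apply: eq_bigr => s _.
have -> : (t - s = (t.-1 - s).+1)%N by have := ltn_ord s; lia.
by rewrite -exprSmx mulmxA.
Qed.

Lemma traj_sub (x0 a : 'cV[R]_dx) (v : nat -> 'cV[R]_dv) (c : 'cV[R]_dv) (t : nat) :
  traj A C w x0 v t - traj A C w a (fun=> c) t
  = A ^+ t *m (x0 - a) + \sum_(s < t) A ^+ (t.-1 - s) *m C *m (v s - c).
Proof.
rewrite !trajE opprD addrACA -mulmxBr -sumrB; congr (_ + _).
by apply: eq_bigr => s _; rewrite -mulmxBr opprD addrACA subrr addr0 -mulmxBr mulmxA.
Qed.

Lemma traj_deviation_le nV nI (cV : 'cV[R]_dv) (GV : 'M[R]_(dv, nV))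
    (GI : 'M[R]_(dx, nI)) (alpha : 'cV[R]_dx) (gamma : 'cV[R]_nI)
    (x0 : 'cV[R]_dx) (v : nat -> 'cV[R]_dv) (t : nat) :
  (forall j, 0 <= gamma j 0) ->
  zonotope alpha (GI *m diag_mx gamma^T) x0 -> (forall s, zonotope cV GV (v s)) ->
  forall i, `|(traj A C w x0 v t - traj A C w alpha (fun=> cV) t) i 0|
  <= (mabs (A ^+ t *m GI) *m gamma
      + \sum_(s < t) mabs (A ^+ (t.-1 - s) *m C *m GV) *m ones R nV) i 0.
Proof.
move=> gamma_ge0 hx0 hv i; rewrite traj_sub ![((_ + _ : 'cV_dx) _ _)]mxE.
apply: le_trans (ler_normD _ _) (lerD _ _).
  by rewrite -mabs_mul_diag_ones // -mulmxA norm_mulmx_zonotope_le.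
rewrite !summxE; apply: le_trans (ler_norm_sum _ _ _) _.
by apply: ler_sum => s _; rewrite norm_mulmx_zonotope_le.
Qed.

End BoxInvariance.

Theorem proposition4p3 (R : realFieldType) (dx dv nV nI : nat)
  (A : 'M[R]_dx) (C : 'M[R]_(dx, dv)) (w : 'cV[R]_dx)
  (cV : 'cV[R]_dv) (GV : 'M[R]_(dv, nV))
  (xlo xhi : 'cV[R]_dx) (T : nat)
  (GI : 'M[R]_(dx, nI)) (alpha : 'cV[R]_dx) (gamma : 'cV[R]_nI)
  (hgamma : forall i, 0 <= gamma i 0) :
  (forall t : nat, (t <= T)%N ->
     vle xlo (A ^+ t *m alpha
              + \sum_(s < t) A ^+ (t.-1 - s) *m (C *m cV + w)
              - mabs (A ^+ t *m GI) *m gamma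
              - \sum_(s < t) mabs (A ^+ (t.-1 - s) *m C *m GV) *m ones R nV)
     /\
     vle (A ^+ t *m alpha
              + \sum_(s < t) A ^+ (t.-1 - s) *m (C *m cV + w)
              + mabs (A ^+ t *m GI) *m gamma
              + \sum_(s < t) mabs (A ^+ (t.-1 - s) *m C *m GV) *m ones R nV) xhi) ->
  forall x : 'cV[R]_dx,
    zonotope alpha (GI *m diag_mx gamma^T) x ->
    Inv A C w (zonotope cV GV) (box xlo xhi) T x.
Proof.
move=> hbounds x hx.
have stays v : (forall s, zonotope cV GV (v s)) ->
    forall t, (t <= T)%N -> box xlo xhi (traj A C w x v t).
  move=> hv t /hbounds[hlo hhi].
  apply: box_of_radius (traj_deviation_le A C w t hgamma hx hv) _ _;
    by rewrite trajE ?opprD addrA.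
split; last exact: stays.
exact: (stays (fun=> cV) (fun=> zonotope_center cV GV) 0%N (leq0n T)).
Qed.
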